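(* The GP 2 program is-dag terminates on any GP 2 host graph in which every node is marked grey and is not a root and every edge is unmarked.
   Context: GP 2 semantics. Host graphs are finite directed graphs whose nodes and edges carry labels (lists of integers and strings) and marks (nodes: unmarked, red, green, blue, grey; edges: unmarked, red, green, blue, dashed); some nodes are roots. A rule is applied by finding an injective label- and mark-compatible match of its left-hand side (mark ''any'' matches every mark; roots match roots) satisfying the dangling condition, then changing matched items as prescribed by the right-hand side. Commands: a rule set call applies one applicable rule, failing if none applies; $P;Q$ sequencing; $P!$ iterates $P$ until it fails (break exits the innermost loop); ''try $C$ then $P$ else $Q$'' runs $C$ and continues with $P$ on its result if it succeeded, else $Q$ on the original graph; ''if $C$ then $P$ else $Q$'' runs $C$ on a copy then $P$ or $Q$ on the original; fail causes failure. The program is-dag (labels unchanged; rule edges directed from node 1 to node 2): Main = (init; DFS!; try unroot else break)!; Check DFS = try next_edge then (try {move, ignore} else (set_flag; break)) else (try loop; try back else break) Check = if flag then fail - init: grey non-root node becomes a red root. - unroot: red root becomes blue non-root. - set_flag: red root becomes green root. - flag: green root; no change. - next_edge: red root 1, node 2 of any mark, unmarked edge 1→2; edge becomes red. - ignore: red root 1, blue node 2, red edge 1→2; edge becomes blue. - move: red root 1, grey node 2, red edge 1→2; node 1 becomes red non-root, node 2 red root, edge dashed. - back: red non-root 1, red root 2, dashed edge 1→2; node 1 becomes red root, node 2 blue non-root, edge blue. - loop: red root with an unmarked loop; node becomes green root. *)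

From mathcomp Require Import all_boot.
From Stdlib Require Strings.String.
From Stdlib Require List.

Set Implicit Arguments.
Unset Strict Implicit.
Unset Printing Implicit Defensive.

Inductive atom := AInt of BinNums.Z | AStr of Strings.String.string.
Definition label := seq atom.

Inductive nmark := NUnmarked | NRed | NGreen | NBlue | NGrey.
Inductive emark := EUnmarked | ERed | EGreen | EBlue | EDashed.

(** None of the rules
    of is-dag adds or deletes items or changes labels, so this part is fixed
    during execution. *)
Record hgraph (V E : finType) := HGraph {
  src : E -> V; tgt : E -> V; nlab : V -> label; elab : E -> label }.

Record state (V E : Type) := St {
  nm : V -> nmark; rt : V -> bool; em : E -> emark }.

(** Rule node: LHS mark (None = "any"), LHS root flag, RHS mark
    (None = unchanged, only used with "any"), RHS root flag. *)
Record nspec := NSpec { ln : option nmark; lr : bool; rn : option nmark; rr : bool }.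
Record espec := ESpec { le : emark; re : emark }.

(** Rules (preserving all items and labels, label patterns are variables):
    one node; one node with a loop; two distinct nodes 1,2 with edge 1 -> 2. *)
Inductive rule :=
| Rule1 of nspec
| RuleLoop of nspec & espec
| Rule2 of nspec & nspec & espec.

Inductive cmd :=
| Call of seq rule
| Seq of cmd & cmd
| Alap of cmd               (* P! *)
| Try of cmd & cmd & cmd    (* try C then P else Q *)
| If of cmd & cmd & cmd     (* if C then P else Q *)
| Skip | Break | Fail.

Section Semantics.
Variables (V E : finType) (G : hgraph V E).

(* A LHS node matches a host node: marks compatible (any matches all),
   LHS roots match only roots (non-root LHS nodes match any node). *)
Definition nmatch (ns : nspec) (s : state V E) (v : V) : Prop :=
  (if ln ns is Some m then nm s v = m else True) /\ (lr ns -> rt s v).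

(* Rootedness changes only where LHS and RHS differ. *)
Definition upd_node (ns : nspec) (v : V) (s : state V E) : state V E :=
  St (fun x => if x == v then (if rn ns is Some m then m else nm s v) else nm s x)
     (fun x => if x == v then (if lr ns == rr ns then rt s v else rr ns) else rt s x)
     (em s).

Definition upd_edge (es : espec) (e : E) (s : state V E) : state V E :=
  St (nm s) (rt s) (fun x => if x == e then re es else em s x).

(* One application of a rule (injective match; dangling condition is vacuous
   as no item is deleted). *)
Inductive apply_rule : rule -> state V E -> state V E -> Prop :=
| AR1 ns s v : nmatch ns s v -> apply_rule (Rule1 ns) s (upd_node ns v s)
| ARLoop ns es s v e :
    nmatch ns s v -> src G e = v -> tgt G e = v -> em s e = le es ->
    apply_rule (RuleLoop ns es) s (upd_edge es e (upd_node ns v s))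
| AR2 n1 n2 es s v1 v2 e :
    v1 != v2 -> nmatch n1 s v1 -> nmatch n2 s v2 ->
    src G e = v1 -> tgt G e = v2 -> em s e = le es ->
    apply_rule (Rule2 n1 n2 es) s (upd_edge es e (upd_node n2 v2 (upd_node n1 v1 s))).

Inductive outcome := Ok of state V E | Failed | Brk of state V E.

Inductive eval : cmd -> state V E -> outcome -> Prop :=
| E_call rs r s s' : List.In r rs -> apply_rule r s s' -> eval (Call rs) s (Ok s')
| E_callF rs s : (forall r s', List.In r rs -> ~ apply_rule r s s') -> eval (Call rs) s Failed
| E_seqOk c1 c2 s s1 o : eval c1 s (Ok s1) -> eval c2 s1 o -> eval (Seq c1 c2) s o
| E_seqF c1 c2 s : eval c1 s Failed -> eval (Seq c1 c2) s Failed
| E_seqB c1 c2 s s1 : eval c1 s (Brk s1) -> eval (Seq c1 c2) s (Brk s1)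
| E_alapOk c s s1 o : eval c s (Ok s1) -> eval (Alap c) s1 o -> eval (Alap c) s o
| E_alapF c s : eval c s Failed -> eval (Alap c) s (Ok s)
| E_alapB c s s1 : eval c s (Brk s1) -> eval (Alap c) s (Ok s1)
| E_tryOk c p q s s1 o : eval c s (Ok s1) -> eval p s1 o -> eval (Try c p q) s o
| E_tryF c p q s o : eval c s Failed -> eval q s o -> eval (Try c p q) s o
| E_tryB c p q s s1 : eval c s (Brk s1) -> eval (Try c p q) s (Brk s1)
| E_ifOk c p q s s1 o : eval c s (Ok s1) -> eval p s o -> eval (If c p q) s o
| E_ifF c p q s o : eval c s Failed -> eval q s o -> eval (If c p q) s o
| E_ifB c p q s s1 : eval c s (Brk s1) -> eval (If c p q) s (Brk s1)
| E_skip s : eval Skip s (Ok s)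
| E_break s : eval Break s (Brk s)
| E_fail s : eval Fail s Failed.

(* "P terminates on s": every execution of P from s is finite
   (no infinite computation, including inside loops and conditions). *)
Inductive terminates : cmd -> state V E -> Prop :=
| T_call rs s : terminates (Call rs) s
| T_seq c1 c2 s : terminates c1 s ->
    (forall s1, eval c1 s (Ok s1) -> terminates c2 s1) -> terminates (Seq c1 c2) s
| T_alap c s : terminates c s ->
    (forall s1, eval c s (Ok s1) -> terminates (Alap c) s1) -> terminates (Alap c) s
| T_try c p q s : terminates c s ->
    (forall s1, eval c s (Ok s1) -> terminates p s1) ->
    (eval c s Failed -> terminates q s) -> terminates (Try c p q) s
| T_if c p q s : terminates c s ->
    (forall s1, eval c s (Ok s1) -> terminates p s) ->
    (eval c s Failed -> terminates q s) -> terminates (If c p q) s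
| T_skip s : terminates Skip s
| T_break s : terminates Break s
| T_fail s : terminates Fail s.

End Semantics.

Definition r_init := Rule1 (NSpec (Some NGrey) false (Some NRed) true).
Definition r_unroot := Rule1 (NSpec (Some NRed) true (Some NBlue) false).
Definition r_set_flag := Rule1 (NSpec (Some NRed) true (Some NGreen) true).
Definition r_flag := Rule1 (NSpec (Some NGreen) true (Some NGreen) true).
Definition r_next_edge := Rule2 (NSpec (Some NRed) true (Some NRed) true)
                                (NSpec None false None false) (ESpec EUnmarked ERed).
Definition r_ignore := Rule2 (NSpec (Some NRed) true (Some NRed) true)
                             (NSpec (Some NBlue) false (Some NBlue) false) (ESpec ERed EBlue).
Definition r_move := Rule2 (NSpec (Some NRed) true (Some NRed) false)
                           (NSpec (Some NGrey) false (Some NRed) true) (ESpec ERed EDashed).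
Definition r_back := Rule2 (NSpec (Some NRed) false (Some NRed) true)
                           (NSpec (Some NRed) true (Some NBlue) false) (ESpec EDashed EBlue).
Definition r_loop := RuleLoop (NSpec (Some NRed) true (Some NGreen) true)
                              (ESpec EUnmarked EUnmarked).

Definition call1 r := Call [:: r].

(* DFS = try next_edge then (try {move, ignore} else (set_flag; break))
         else (try loop; try back else break) *)
Definition DFS : cmd :=
  Try (call1 r_next_edge)
      (Try (Call [:: r_move; r_ignore]) Skip (Seq (call1 r_set_flag) Break))
      (Seq (Try (call1 r_loop) Skip Skip) (Try (call1 r_back) Skip Break)).

Definition Check : cmd := If (call1 r_flag) Fail Skip.

(* Main = (init; DFS!; try unroot else break)!; Check *)
Definition is_dag : cmd :=
  Seq (Alap (Seq (call1 r_init) (Seq (Alap DFS) (Try (call1 r_unroot) Skip Break))))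
      Check.

From mathcomp Require Import all_boot zify.

(* Each of the two loops of is-dag has its own decreasing measure.  Every round of the
   outer loop starts with init, which turns a grey node red, and no rule creates a grey
   node, so the number of grey nodes drops.  For DFS!, weight the edges by
   unmarked = 3, red = 2, dashed = 1, blue = green = 0: no rule raises the weight of its
   edge, and a successful DFS step applies next_edge (unmarked -> red) or back
   (dashed -> blue), so the total edge weight drops.  Loop-free commands terminate
   outright. *)

Set Implicit Arguments.
Unset Strict Implicit.
Unset Printing Implicit Defensive.

Section Termination.
Variables (V E : finType) (G : hgraph V E).

Fixpoint rules_of (c : cmd) : seq rule :=
  match c with
  | Call rs => rs
  | Seq c1 c2 => rules_of c1 ++ rules_of c2
  | Alap c1 => rules_of c1
  | Try c1 c2 c3 | If c1 c2 c3 => rules_of c1 ++ rules_of c2 ++ rules_of c3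
  | Skip | Break | Fail => [::]
  end.

Definition final (o : outcome V E) : option (state V E) :=
  if o is (Ok s | Brk s) then Some s else None.

Lemma all_In (T : Type) (P : pred T) (x : T) (xs : seq T) :
  all P xs -> List.In x xs -> P x.
Proof. by elim: xs => //= y xs IH /andP[Py Pxs] [<- | /(IH Pxs)]. Qed.

Section Invariant.
Variables (R : state V E -> state V E -> Prop) (P : pred rule).
Hypothesis R_refl : forall s, R s s.
Hypothesis R_trans : forall s1 s2 s3, R s3 s2 -> R s2 s1 -> R s3 s1.
Hypothesis R_rule : forall r s s', P r -> apply_rule G r s s' -> R s' s.

Lemma eval_invariant c s o s' :
  eval G c s o -> all P (rules_of c) -> final o = Some s' -> R s' s.
Proof.
move=> ev; elim: ev s' => {c s o} //=.
- move=> rs r s s1 r_in app s' Prs [<-]; exact: R_rule (all_In Prs r_in) app.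
- move=> c1 c2 s s1 o _ IH1 _ IH2 s'; rewrite all_cat => /andP[P1 P2] fin.
  exact: R_trans (IH2 _ P2 fin) (IH1 _ P1 erefl).
- by move=> c1 c2 s s1 _ IH1 s'; rewrite all_cat => /andP[P1 _]; apply: IH1.
- move=> c s s1 o _ IH1 _ IH2 s' Pc fin.
  exact: R_trans (IH2 _ Pc fin) (IH1 _ Pc erefl).
- by move=> c s _ _ s' _ [<-].
- move=> c p q s s1 o _ IH1 _ IH2 s'; rewrite !all_cat => /and3P[Pc Pp _] fin.
  exact: R_trans (IH2 _ Pp fin) (IH1 _ Pc erefl).
- by move=> c p q s o _ _ _ IH s'; rewrite !all_cat => /and3P[_ _ Pq]; apply: IH.
- by move=> c p q s s1 _ IH s'; rewrite !all_cat => /and3P[Pc _ _]; apply: IH.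
- by move=> c p q s s1 o _ _ _ IH s'; rewrite !all_cat => /and3P[_ Pp _]; apply: IH.
- by move=> c p q s o _ _ _ IH s'; rewrite !all_cat => /and3P[_ _ Pq]; apply: IH.
- by move=> c p q s s1 _ IH s'; rewrite !all_cat => /and3P[Pc _ _]; apply: IH.
- by move=> s s' _ [<-].
- by move=> s s' _ [<-].
Qed.
End Invariant.

Fixpoint loop_free (c : cmd) : bool :=
  match c with
  | Alap _ => false
  | Seq c1 c2 => loop_free c1 && loop_free c2
  | Try c1 c2 c3 | If c1 c2 c3 => [&& loop_free c1, loop_free c2 & loop_free c3]
  | Call _ | Skip | Break | Fail => true
  end.

Lemma loop_free_terminates c s : loop_free c -> terminates G c s.
Proof.
elim: c s => [rs | c1 IH1 c2 IH2 | // | c1 IH1 c2 IH2 c3 IH3 | c1 IH1 c2 IH2 c3 IH3 | | |] s /=.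
all: try by constructor.
- by case/andP=> lf1 lf2; constructor=> *; auto.
- by case/and3P=> lf1 lf2 lf3; constructor=> *; auto.
- by case/and3P=> lf1 lf2 lf3; constructor=> *; auto.
Qed.



Lemma Alap_terminates_measure (f : state V E -> nat) c :
  (forall s, terminates G c s) ->
  (forall s s', eval G c s (Ok s') -> f s' < f s) ->
  forall s, terminates G (Alap c) s.
Proof.
move=> c_term f_dec s; have [n] := ubnP (f s); elim: n s => // n IH s fs_lt.
constructor=> // s' ev; apply: IH; exact: leq_trans (f_dec _ _ ev) fs_lt.
Qed.

Lemma eval_call1_Ok r s s' : eval G (call1 r) s (Ok s') -> apply_rule G r s s'.
Proof.
move=> ev; inversion ev as [rs r' s0 s1 r_in app | | | | | | | | | | | | | | | |].
by case: r_in => [-> | []].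
Qed.

Lemma eval_Seq_Ok c1 c2 s s' :
  eval G (Seq c1 c2) s (Ok s') -> exists2 s1, eval G c1 s (Ok s1) & eval G c2 s1 (Ok s').
Proof. by move=> ev; inversion ev; eauto. Qed.

Lemma eval_Try_Ok c p q s s' :
  eval G (Try c p q) s (Ok s') ->
  (exists2 s1, eval G c s (Ok s1) & eval G p s1 (Ok s')) \/
  (eval G c s (Failed V E) /\ eval G q s (Ok s')).
Proof. by move=> ev; inversion ev; eauto. Qed.

Definition edge_weight (m : emark) : nat :=
  match m with EUnmarked => 3 | ERed => 2 | EDashed => 1 | EBlue | EGreen => 0 end.

Definition weight (s : state V E) : nat := \sum_(e : E) edge_weight (em s e).

Definition lhs_weight (r : rule) : nat :=
  if r is (RuleLoop _ es | Rule2 _ _ es) then edge_weight (le es) else 0.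

Definition rhs_weight (r : rule) : nat :=
  if r is (RuleLoop _ es | Rule2 _ _ es) then edge_weight (re es) else 0.

Lemma weight_upd_edge es e s :
  weight (upd_edge es e s) + edge_weight (em s e) = weight s + edge_weight (re es).
Proof.
rewrite /weight (bigD1 e) //= [in RHS](bigD1 e) //= eqxx.
by rewrite (eq_bigr (fun i => edge_weight (em s i))) => [|i /negbTE ->]; first lia.
Qed.

Lemma weight_apply_rule r s s' :
  apply_rule G r s s' -> weight s' + lhs_weight r = weight s + rhs_weight r.
Proof.
case=> [ns s0 v _ | ns es s0 v e _ _ _ em_e | n1 n2 es s0 v1 v2 e _ _ _ _ _ em_e] /=.
  by rewrite !addn0.
all: by rewrite -em_e; apply: weight_upd_edge.
Qed.

Definition weight_nonincreasing (r : rule) : bool := rhs_weight r <= lhs_weight r.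

Lemma eval_weight_le c s s' :
  eval G c s (Ok s') -> all weight_nonincreasing (rules_of c) -> weight s' <= weight s.
Proof.
move=> ev Pc; apply: (eval_invariant (R := fun a b => weight a <= weight b)) ev Pc _ => //.
- by move=> ? ? ? /leq_trans; apply.
- by move=> r ? ? /[swap] /weight_apply_rule; rewrite /weight_nonincreasing; lia.
Qed.

Lemma DFS_weight_decreasing s s' : eval G DFS s (Ok s') -> weight s' < weight s.
Proof.
case/eval_Try_Ok=> [[s1 /eval_call1_Ok next rest] | [_ /eval_Seq_Ok [s1 lp bk]]].
  have := weight_apply_rule next; have := eval_weight_le rest isT; rewrite /=; lia.
have := eval_weight_le lp isT.
case/eval_Try_Ok: bk => [[s2 /eval_call1_Ok back skip] | [_ brk]]; last by inversion brk.
have := weight_apply_rule back; have := eval_weight_le skip isT; rewrite /=; lia.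
Qed.

Definition is_grey (m : nmark) : bool := if m is NGrey then true else false.

Definition greys (s : state V E) : {set V} := [set v | is_grey (nm s v)].

Definition rhs_not_grey (ns : nspec) : bool :=
  if rn ns is Some m then ~~ is_grey m else true.

Definition creates_no_grey (r : rule) : bool :=
  match r with
  | Rule1 ns | RuleLoop ns _ => rhs_not_grey ns
  | Rule2 n1 n2 _ => rhs_not_grey n1 && rhs_not_grey n2
  end.

Lemma greys_upd_node ns v s :
  rhs_not_grey ns -> greys (upd_node ns v s) \subset greys s.
Proof.
move=> no_grey; apply/subsetP => x; rewrite !inE /=.
case: eqP => // ->; move: no_grey; rewrite /rhs_not_grey.
by case: (rn ns) => // m /negbTE ->.
Qed.

Lemma greys_apply_rule r s s' :
  creates_no_grey r -> apply_rule G r s s' -> greys s' \subset greys s.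
Proof.
move=> + app; case: app => /= [ns s0 v _ | ns es s0 v e _ _ _ _ |].
- exact: greys_upd_node.
- exact: greys_upd_node.
- move=> n1 n2 es s0 v1 v2 e _ _ _ _ _ _ /andP[ng1 ng2].
  exact: subset_trans (greys_upd_node v2 _ ng2) (greys_upd_node v1 s0 ng1).
Qed.

Lemma eval_greys_subset c s s' :
  eval G c s (Ok s') -> all creates_no_grey (rules_of c) -> greys s' \subset greys s.
Proof.
move=> ev Pc; apply: (eval_invariant (R := fun a b => greys a \subset greys b)) ev Pc _ => //.
- by move=> ? ? ? /subset_trans; apply.
- exact: greys_apply_rule.
Qed.

Lemma greys_init s s' : apply_rule G r_init s s' -> greys s' \proper greys s.
Proof.
move=> app; inversion app as [ns s0 v [grey_v _] | |]; apply/properP; split.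
- by apply/subsetP => x; rewrite !inE /=; case: eqP => // ->.
- by exists v; rewrite !inE /= ?eqxx ?grey_v.
Qed.

Definition dag_round : cmd :=
  Seq (call1 r_init) (Seq (Alap DFS) (Try (call1 r_unroot) Skip Break)).

Lemma dag_round_greys_decreasing s s' :
  eval G dag_round s (Ok s') -> #|greys s'| < #|greys s|.
Proof.
case/eval_Seq_Ok=> s1 /eval_call1_Ok /greys_init init_lt /eval_greys_subset rest_le.
exact: leq_ltn_trans (subset_leq_card (rest_le isT)) (proper_card init_lt).
Qed.

Lemma dag_round_terminates s : terminates G dag_round s.
Proof.
have DFS_loop_terminates := Alap_terminates_measure
  (fun s => @loop_free_terminates DFS s isT) DFS_weight_decreasing.
constructor=> [|s1 _]; first exact: loop_free_terminates.
by constructor=> [|s2 _]; [apply: DFS_loop_terminates | apply: loop_free_terminates].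
Qed.

End Termination.

Theorem mainTheorem6 (V E : finType) (G : hgraph V E) (s : state V E) :
  (forall v, nm s v = NGrey) -> (forall v, rt s v = false) ->
  (forall e, em s e = EUnmarked) ->
  terminates G is_dag s.
Proof.
move=> _ _ _; constructor=> [|s' _]; last exact: loop_free_terminates.
exact: Alap_terminates_measure (dag_round_terminates G) (@dag_round_greys_decreasing _ _ G) s.
Qed.
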